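(* Let $\mathcal{B}^0\subset\mathbb{R}^6$ be the set of all $(a,b,c,d,e,f)\neq 0$ such that the Type $\mathcal{B}$ model $\mathcal{N}(a,b,c,d,e,f)$ is flat. Define $\mathcal{U}_1(r,s):=(1+rs^2,\,-s(1+rs^2),\,rs,\,-rs^2,\,r,\,-rs)$, $\mathcal{U}_2(u,v):=(u,v,0,0,0,0)$, $\mathcal{U}_3(u,v):=(u,v,0,1+u,0,0)$, and let $\mathcal{B}_i$ be the range of $\mathcal{U}_i$ (over all real parameters). Then $\mathcal{B}^0=(\mathcal{B}_1\cup\mathcal{B}_2\cup\mathcal{B}_3)\setminus\{0\}$. Moreover $\mathcal{B}_2$ and $\mathcal{B}_3$ are closed smooth surfaces in $\mathbb{R}^6$ diffeomorphic to $\mathbb{R}^2$ which intersect transversally along the curve $\{(-1,v,0,0,0,0):v\in\mathbb{R}\}$; and $\mathcal{B}_1$ can be completed to a smooth closed surface $\tilde{\mathcal{B}}_1$ which intersects $\mathcal{B}_2$ transversally along the curve $\{(1,v,0,0,0,0):v\in\mathbb{R}\}$ and intersects $\mathcal{B}_3$ transversally along the curve $\{(0,v,0,1,0,0):v\in\mathbb{R}\}$.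
   Context: For $(a,b,c,d,e,f)\in\mathbb{R}^6$, the Type $\mathcal{B}$ model $\mathcal{N}(a,b,c,d,e,f)$ is $(\mathbb{R}^+\times\mathbb{R},\nabla)$ where $\nabla$ is the torsion free connection with Christoffel symbols ($\nabla_{\partial_{x^i}}\partial_{x^j}=\Gamma_{ij}{}^k\partial_{x^k}$) $\Gamma_{11}{}^1=a/x^1$, $\Gamma_{11}{}^2=b/x^1$, $\Gamma_{12}{}^1=\Gamma_{21}{}^1=c/x^1$, $\Gamma_{12}{}^2=\Gamma_{21}{}^2=d/x^1$, $\Gamma_{22}{}^1=e/x^1$, $\Gamma_{22}{}^2=f/x^1$; this identifies Type $\mathcal{B}$ geometries with $\mathbb{R}^6$. Its Ricci tensor is $\rho=(x^1)^{-2}\begin{pmatrix}(a-d+1)d+b(f-c) & cd-be+f\\ c(d-1)-be & -c^2+fc+(a-d-1)e\end{pmatrix}$, and the model is flat iff $\rho=0$. *)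

From Stdlib Require Import Reals.
From Coquelicot Require Import Coquelicot.
Open Scope R_scope.

Record P6 := mkP6 { pa : R; pb : R; pc : R; pd : R; pe : R; pf : R }.

Definition zero6 : P6 := mkP6 0 0 0 0 0 0.
Definition add6 (p q : P6) : P6 :=
  mkP6 (pa p + pa q) (pb p + pb q) (pc p + pc q) (pd p + pd q) (pe p + pe q) (pf p + pf q).
Definition scal6 (t : R) (p : P6) : P6 :=
  mkP6 (t * pa p) (t * pb p) (t * pc p) (t * pd p) (t * pe p) (t * pf p).

(** Ricci tensor of the Type B model N(a,b,c,d,e,f) at a point with first
    coordinate x1 > 0 (it does not depend on x2); indices 1,2 as nat. *)
Definition ricci (p : P6) (x1 : R) (i j : nat) : R :=
  let a := pa p in let b := pb p in let c := pc p in
  let d := pd p in let e := pe p in let f := pf p in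
  / (x1 ^ 2) *
  match i, j with
  | 1%nat, 1%nat => (a - d + 1) * d + b * (f - c)
  | 1%nat, 2%nat => c * d - b * e + f
  | 2%nat, 1%nat => c * (d - 1) - b * e
  | _, _ => - c ^ 2 + f * c + (a - d - 1) * e
  end.

Definition flat (p : P6) : Prop :=
  forall x1 : R, 0 < x1 -> forall i j : nat, (1 <= i <= 2)%nat -> (1 <= j <= 2)%nat ->
    ricci p x1 i j = 0.

Definition BB0 (p : P6) : Prop := p <> zero6 /\ flat p.

Definition U1 (r s : R) : P6 :=
  mkP6 (1 + r * s ^ 2) (- s * (1 + r * s ^ 2)) (r * s) (- r * s ^ 2) r (- r * s).
Definition U2 (u v : R) : P6 := mkP6 u v 0 0 0 0.
Definition U3 (u v : R) : P6 := mkP6 u v 0 (1 + u) 0 0.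

Definition BB1 (p : P6) : Prop := exists r s, p = U1 r s.
Definition BB2 (p : P6) : Prop := exists u v, p = U2 u v.
Definition BB3 (p : P6) : Prop := exists u v, p = U3 u v.

(** Topology of R^6 and R^2 (max-norm balls; same topology as Euclidean). *)
Definition ball6 (p : P6) (r : R) (q : P6) : Prop :=
  Rabs (pa q - pa p) < r /\ Rabs (pb q - pb p) < r /\ Rabs (pc q - pc p) < r /\
  Rabs (pd q - pd p) < r /\ Rabs (pe q - pe p) < r /\ Rabs (pf q - pf p) < r.
Definition open6 (W : P6 -> Prop) : Prop :=
  forall p, W p -> exists r, 0 < r /\ forall q, ball6 p r q -> W q.
Definition closed6 (S : P6 -> Prop) : Prop := open6 (fun p => ~ S p).
Definition closure6 (S : P6 -> Prop) (p : P6) : Prop :=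
  forall r, 0 < r -> exists q, S q /\ ball6 p r q.
Definition open2 (O : R -> R -> Prop) : Prop :=
  forall x y, O x y -> exists r, 0 < r /\
    forall x' y', Rabs (x' - x) < r -> Rabs (y' - y) < r -> O x' y'.

Fixpoint Ck (k : nat) (Dom : R -> R -> Prop) (g : R -> R -> R) : Prop :=
  match k with
  | 0%nat => forall x y, Dom x y -> continuity_2d_pt g x y
  | S k' =>
      (forall x y, Dom x y -> continuity_2d_pt g x y) /\
      (forall x y, Dom x y -> ex_derive (fun t => g t y) x /\ ex_derive (fun t => g x t) y) /\
      Ck k' Dom (fun x y => Derive (fun t => g t y) x) /\
      Ck k' Dom (fun x y => Derive (fun t => g x t) y)
  end.

Definition smooth_on (O : R -> R -> Prop) (phi : R -> R -> P6) : Prop :=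
  forall k : nat,
    Ck k O (fun x y => pa (phi x y)) /\ Ck k O (fun x y => pb (phi x y)) /\
    Ck k O (fun x y => pc (phi x y)) /\ Ck k O (fun x y => pd (phi x y)) /\
    Ck k O (fun x y => pe (phi x y)) /\ Ck k O (fun x y => pf (phi x y)).

Definition dx (phi : R -> R -> P6) (x y : R) : P6 :=
  mkP6 (Derive (fun t => pa (phi t y)) x) (Derive (fun t => pb (phi t y)) x)
       (Derive (fun t => pc (phi t y)) x) (Derive (fun t => pd (phi t y)) x)
       (Derive (fun t => pe (phi t y)) x) (Derive (fun t => pf (phi t y)) x).
Definition dy (phi : R -> R -> P6) (x y : R) : P6 :=
  mkP6 (Derive (fun t => pa (phi x t)) y) (Derive (fun t => pb (phi x t)) y)
       (Derive (fun t => pc (phi x t)) y) (Derive (fun t => pd (phi x t)) y)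
       (Derive (fun t => pe (phi x t)) y) (Derive (fun t => pf (phi x t)) y).

Definition immersive_at (phi : R -> R -> P6) (x y : R) : Prop :=
  forall al be : R, add6 (scal6 al (dx phi x y)) (scal6 be (dy phi x y)) = zero6 ->
    al = 0 /\ be = 0.

(** phi restricted to O is a smooth embedding (injective immersion which is a
    homeomorphism onto its image) whose image is exactly S /\ W. *)
Definition chart (S : P6 -> Prop) (W : P6 -> Prop) (O : R -> R -> Prop)
    (phi : R -> R -> P6) : Prop :=
  open6 W /\ open2 O /\ smooth_on O phi /\
  (forall x y, O x y -> S (phi x y) /\ W (phi x y)) /\
  (forall q, S q -> W q -> exists x y, O x y /\ phi x y = q) /\
  (forall x y x' y', O x y -> O x' y' -> phi x y = phi x' y' -> x = x' /\ y = y') /\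
  (forall x y, O x y -> immersive_at phi x y) /\
  (forall x y, O x y -> forall eps, 0 < eps -> exists del, 0 < del /\
     forall x' y', O x' y' -> ball6 (phi x y) del (phi x' y') ->
       Rabs (x' - x) < eps /\ Rabs (y' - y) < eps).

Definition smooth_surface (S : P6 -> Prop) : Prop :=
  forall p, S p -> exists W O phi, chart S W O phi /\ W p.

Definition diffeo_R2 (S : P6 -> Prop) : Prop :=
  exists phi, chart S (fun _ => True) (fun _ _ => True) phi.

Definition tangent (S : P6 -> Prop) (p v : P6) : Prop :=
  exists W O phi x y, chart S W O phi /\ O x y /\ phi x y = p /\
    exists al be, v = add6 (scal6 al (dx phi x y)) (scal6 be (dy phi x y)).

(** Two surfaces intersect exactly along C, and transversally there: at each
    point of C their tangent planes are distinct (in R^6 two surfaces cannot be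
    transversal in the dimension-count sense). *)
Definition transversal_along (S1 S2 C : P6 -> Prop) : Prop :=
  (forall p, (S1 p /\ S2 p) <-> C p) /\
  (forall p, C p -> ~ (forall v, tangent S1 p v <-> tangent S2 p v)).

(* Flatness is the vanishing of the four quadratic polynomials rho_ij.  Their
   difference rho12 - rho21 gives f = -c.  If e = 0 then rho22 forces c = 0 and
   rho11 = (a - d + 1) d leaves d = 0 or d = a + 1, i.e. the planes B2 and B3;
   if e <> 0 the combination e rho11 - d rho22 - 2 c rho21 = 2 (d e + c^2)
   pins p down as U1 (e, c / e).

   Each surface is the image of a polynomial map admitting, near every point,
   a continuous left inverse (a coordinate or a quotient of coordinates), which
   makes it an embedded surface.  The completion of B1 adds the line
   {(0,v,0,1,0,0)}; it is cut out by flatness and a + d = 1, and a second chart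
   psi covers it.  Transversality along each intersection curve is witnessed by
   a tangent vector of one surface violating a linear equation (d - a = 1,
   e = 0 or c = 0) satisfied by the other. *)

From Stdlib Require Import Reals Lra Lia Psatz Classical.
From Coquelicot Require Import Coquelicot.
Open Scope R_scope.

(** * Polynomial maps are smooth *)

Inductive poly2 : (R -> R -> R) -> Prop :=
| poly2_const c : poly2 (fun _ _ => c)
| poly2_x : poly2 (fun x _ => x)
| poly2_y : poly2 (fun _ y => y)
| poly2_add f g : poly2 f -> poly2 g -> poly2 (fun x y => f x y + g x y)
| poly2_mul f g : poly2 f -> poly2 g -> poly2 (fun x y => f x y * g x y)
| poly2_ext f g : (forall x y, f x y = g x y) -> poly2 f -> poly2 g.

Lemma poly2_opp f : poly2 f -> poly2 (fun x y => - f x y).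
Proof.
intro Hf; apply (poly2_ext (fun x y => -1 * f x y)); [intros; ring|].
now apply poly2_mul; [apply poly2_const|].
Qed.

Lemma poly2_sub f g : poly2 f -> poly2 g -> poly2 (fun x y => f x y - g x y).
Proof. intros Hf Hg; apply poly2_add; [exact Hf | exact (poly2_opp g Hg)]. Qed.

Lemma poly2_pow f n : poly2 f -> poly2 (fun x y => f x y ^ n).
Proof.
intro Hf; induction n as [|n IHn]; simpl.
- apply poly2_const.
- now apply poly2_mul.
Qed.

Lemma poly2_swap f : poly2 f -> poly2 (fun x y => f y x).
Proof.
induction 1.
- apply poly2_const.
- apply poly2_y.
- apply poly2_x.
- now apply poly2_add.
- now apply poly2_mul.
- now apply (poly2_ext (fun x y => f y x)).
Qed.

Ltac solve_poly2 := repeat first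
  [ apply poly2_const | apply poly2_x | apply poly2_y | apply poly2_pow
  | apply poly2_sub | apply poly2_opp | apply poly2_add | apply poly2_mul ].

Lemma poly2_continuous f : poly2 f -> forall x y, continuity_2d_pt f x y.
Proof.
induction 1; intros x y.
- apply continuity_2d_pt_const.
- apply continuity_2d_pt_id1.
- apply continuity_2d_pt_id2.
- now apply continuity_2d_pt_plus.
- now apply continuity_2d_pt_mult.
- now apply (continuity_2d_pt_ext f).
Qed.

Lemma poly2_derive_x f : poly2 f ->
  exists f', poly2 f' /\ forall x y, is_derive (fun t => f t y) x (f' x y).
Proof.
induction 1 as [c| | |f g _ [f' [Hf' Df]] _ [g' [Hg' Dg]]
               |f g Hf [f' [Hf' Df]] Hg [g' [Hg' Dg]]|f g Hfg _ [f' [Hf' Df]]].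
- exists (fun _ _ => 0); split; [apply poly2_const|]; intros; auto_derive; easy.
- exists (fun _ _ => 1); split; [apply poly2_const|]; intros; auto_derive; easy.
- exists (fun _ _ => 0); split; [apply poly2_const|]; intros; auto_derive; easy.
- exists (fun x y => f' x y + g' x y); split; [now apply poly2_add|].
  intros x y; now apply (is_derive_plus (fun t => f t y) (fun t => g t y)).
- exists (fun x y => f' x y * g x y + f x y * g' x y); split.
  + now apply poly2_add; apply poly2_mul.
  + intros x y; apply (is_derive_mult (fun t => f t y) (fun t => g t y)); auto.
    intros; apply Rmult_comm.
- exists f'; split; [exact Hf'|].
  intros x y; apply (is_derive_ext (fun t => f t y)); auto.
Qed.

Lemma poly2_derive_y f : poly2 f ->
  exists f', poly2 f' /\ forall x y, is_derive (fun t => f x t) y (f' x y).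
Proof.
intro Hf; destruct (poly2_derive_x _ (poly2_swap f Hf)) as [g [Hg Dg]].
exists (fun x y => g y x); split; [exact (poly2_swap g Hg)|].
intros x y; exact (Dg y x).
Qed.

Lemma poly2_Ck k : forall f, poly2 f -> forall D, Ck k D f.
Proof.
induction k as [|k IHk]; intros f Hf D; simpl.
- intros x y _; now apply poly2_continuous.
- destruct (poly2_derive_x f Hf) as [fx [Hfx Dfx]].
  destruct (poly2_derive_y f Hf) as [fy [Hfy Dfy]].
  split; [intros x y _; now apply poly2_continuous|].
  split; [intros x y _; split; eexists; eauto|].
  split; apply IHk.
  + apply (poly2_ext fx); [|exact Hfx].
    intros x y; symmetry; apply is_derive_unique, Dfx.
  + apply (poly2_ext fy); [|exact Hfy].
    intros x y; symmetry; apply is_derive_unique, Dfy.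
Qed.

Lemma smooth_on_poly2 O phi :
  poly2 (fun x y => pa (phi x y)) -> poly2 (fun x y => pb (phi x y)) ->
  poly2 (fun x y => pc (phi x y)) -> poly2 (fun x y => pd (phi x y)) ->
  poly2 (fun x y => pe (phi x y)) -> poly2 (fun x y => pf (phi x y)) ->
  smooth_on O phi.
Proof. intros; intro k; repeat split; now apply poly2_Ck. Qed.

(** * Continuity and closed sets in R^6 *)

Definition cont6 (g : P6 -> R) (q : P6) : Prop :=
  forall eps, 0 < eps -> exists del, 0 < del /\
    forall q', ball6 q del q' -> Rabs (g q' - g q) < eps.

Lemma ball6_center q r : 0 < r -> ball6 q r q.
Proof. intro Hr; unfold ball6; rewrite !Rminus_eq_0, !Rabs_R0; tauto. Qed.

Lemma ball6_le q r r' q' : r <= r' -> ball6 q r q' -> ball6 q r' q'.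
Proof. unfold ball6; intros; lra. Qed.

Lemma ball6_Rmin_l q r r' q' : ball6 q (Rmin r r') q' -> ball6 q r q'.
Proof. apply ball6_le, Rmin_l. Qed.

Lemma ball6_Rmin_r q r r' q' : ball6 q (Rmin r r') q' -> ball6 q r' q'.
Proof. apply ball6_le, Rmin_r. Qed.

Lemma cont6_const k q : cont6 (fun _ => k) q.
Proof. intros eps Heps; exists 1; split; [lra|]; intros; now rewrite Rminus_eq_0, Rabs_R0. Qed.

Lemma cont6_pa q : cont6 pa q. Proof. intros eps ?; exists eps; split; [|intros ? B; apply B]; easy. Qed.
Lemma cont6_pb q : cont6 pb q. Proof. intros eps ?; exists eps; split; [|intros ? B; apply B]; easy. Qed.
Lemma cont6_pc q : cont6 pc q. Proof. intros eps ?; exists eps; split; [|intros ? B; apply B]; easy. Qed.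
Lemma cont6_pd q : cont6 pd q. Proof. intros eps ?; exists eps; split; [|intros ? B; apply B]; easy. Qed.
Lemma cont6_pe q : cont6 pe q. Proof. intros eps ?; exists eps; split; [|intros ? B; apply B]; easy. Qed.
Lemma cont6_pf q : cont6 pf q. Proof. intros eps ?; exists eps; split; [|intros ? B; apply B]; easy. Qed.

Lemma cont6_comp2 h g1 g2 q : cont6 g1 q -> cont6 g2 q ->
  continuity_2d_pt h (g1 q) (g2 q) -> cont6 (fun q => h (g1 q) (g2 q)) q.
Proof.
intros H1 H2 Hh eps Heps.
destruct (Hh (mkposreal eps Heps)) as [d Hd].
destruct (H1 d (cond_pos d)) as [d1 [Hd1 B1]].
destruct (H2 d (cond_pos d)) as [d2 [Hd2 B2]].
exists (Rmin d1 d2); split; [now apply Rmin_pos|].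
intros q' Hq'; apply Hd.
- now apply B1, (ball6_Rmin_l _ _ d2).
- now apply B2, (ball6_Rmin_r _ d1).
Qed.

Lemma cont6_plus g1 g2 q : cont6 g1 q -> cont6 g2 q -> cont6 (fun q => g1 q + g2 q) q.
Proof.
intros; apply (cont6_comp2 Rplus); auto.
apply continuity_2d_pt_plus; [apply continuity_2d_pt_id1 | apply continuity_2d_pt_id2].
Qed.

Lemma cont6_minus g1 g2 q : cont6 g1 q -> cont6 g2 q -> cont6 (fun q => g1 q - g2 q) q.
Proof.
intros; apply (cont6_comp2 Rminus); auto.
apply continuity_2d_pt_minus; [apply continuity_2d_pt_id1 | apply continuity_2d_pt_id2].
Qed.

Lemma cont6_mult g1 g2 q : cont6 g1 q -> cont6 g2 q -> cont6 (fun q => g1 q * g2 q) q.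
Proof.
intros; apply (cont6_comp2 Rmult); auto.
apply continuity_2d_pt_mult; [apply continuity_2d_pt_id1 | apply continuity_2d_pt_id2].
Qed.

Lemma cont6_opp g q : cont6 g q -> cont6 (fun q => - g q) q.
Proof.
intro H; apply (cont6_comp2 (fun x _ => - x) g g); auto.
apply continuity_2d_pt_opp, continuity_2d_pt_id1.
Qed.

Lemma cont6_div g1 g2 q : cont6 g1 q -> cont6 g2 q -> g2 q <> 0 ->
  cont6 (fun q => g1 q / g2 q) q.
Proof.
intros H1 H2 Hnz; apply (cont6_comp2 Rdiv); auto.
apply continuity_2d_pt_mult; [apply continuity_2d_pt_id1|].
apply continuity_2d_pt_inv; [apply continuity_2d_pt_id2 | exact Hnz].
Qed.

Lemma cont6_pow g n q : cont6 g q -> cont6 (fun q => g q ^ n) q.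
Proof.
intro H; induction n as [|n IHn]; simpl.
- apply cont6_const.
- now apply cont6_mult.
Qed.

Ltac solve_cont6 := repeat first
  [ apply cont6_const | apply cont6_pa | apply cont6_pb | apply cont6_pc
  | apply cont6_pd | apply cont6_pe | apply cont6_pf | apply cont6_pow
  | apply cont6_plus | apply cont6_minus | apply cont6_opp | apply cont6_div
  | apply cont6_mult ].

Lemma open6_neq0 g : (forall q, cont6 g q) -> open6 (fun q => g q <> 0).
Proof.
intros Hg q Hq.
destruct (Hg q (Rabs (g q)) (Rabs_pos_lt _ Hq)) as [d [Hd B]].
exists d; split; [exact Hd|]; intros q' Hq' E.
specialize (B q' Hq'); rewrite E, Rminus_0_l, Rabs_Ropp in B; lra.
Qed.

Lemma closed6_eq0 g : (forall q, cont6 g q) -> closed6 (fun q => g q = 0).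
Proof. exact (open6_neq0 g). Qed.

Lemma closed6_and S T : closed6 S -> closed6 T -> closed6 (fun q => S q /\ T q).
Proof.
intros HS HT q Hq.
destruct (not_and_or _ _ Hq) as [HnS|HnT].
- destruct (HS q HnS) as [r [Hr B]]; exists r; split; [exact Hr|]; intros q' Hq' [H _]; exact (B q' Hq' H).
- destruct (HT q HnT) as [r [Hr B]]; exists r; split; [exact Hr|]; intros q' Hq' [_ H]; exact (B q' Hq' H).
Qed.

Lemma closed6_ext S T : (forall q, S q <-> T q) -> closed6 S -> closed6 T.
Proof.
intros HST HS q Hq; destruct (HS q) as [r [Hr B]]; [now rewrite HST|].
exists r; split; [exact Hr|]; intros q' Hq'; rewrite <- HST; now apply B.
Qed.

Ltac solve_closed6 := repeat apply closed6_and; apply closed6_eq0; intro; solve_cont6.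

(** * Charts from local left inverses *)

Definition local_left_inverse (O : R -> R -> Prop) (phi : R -> R -> P6) (x y : R) : Prop :=
  exists (D : P6 -> Prop) (gx gy : P6 -> R),
    open6 D /\ D (phi x y) /\ cont6 gx (phi x y) /\ cont6 gy (phi x y) /\
    forall x' y', O x' y' -> D (phi x' y') -> gx (phi x' y') = x' /\ gy (phi x' y') = y'.

Section LocalLeftInverse.

Variables (O : R -> R -> Prop) (phi : R -> R -> P6) (x y : R).
Hypotheses (Oxy : O x y) (Hinv : local_left_inverse O phi x y).

Lemma local_left_inverse_inj x' y' : O x' y' -> phi x y = phi x' y' -> x = x' /\ y = y'.
Proof.
intros Oxy' E; destruct Hinv as [D [gx [gy [_ [Dxy [_ [_ Hg]]]]]]].
destruct (Hg x y Oxy Dxy) as [Ex Ey].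
rewrite E in Dxy; destruct (Hg x' y' Oxy' Dxy) as [Ex' Ey'].
split; congruence.
Qed.

Lemma local_left_inverse_continuous eps : 0 < eps -> exists del, 0 < del /\
  forall x' y', O x' y' -> ball6 (phi x y) del (phi x' y') ->
    Rabs (x' - x) < eps /\ Rabs (y' - y) < eps.
Proof.
intro Heps; destruct Hinv as [D [gx [gy [HD [Dxy [Cx [Cy Hg]]]]]]].
destruct (HD _ Dxy) as [d0 [Hd0 B0]].
destruct (Cx eps Heps) as [d1 [Hd1 B1]].
destruct (Cy eps Heps) as [d2 [Hd2 B2]].
exists (Rmin d0 (Rmin d1 d2)); split; [now repeat apply Rmin_pos|].
intros x' y' Oxy' B.
destruct (Hg x y Oxy Dxy) as [Ex Ey].
destruct (Hg x' y' Oxy' (B0 _ (ball6_Rmin_l _ _ _ _ B))) as [Ex' Ey'].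
apply ball6_Rmin_r in B; split.
- rewrite <- Ex', <- Ex; now apply B1, (ball6_Rmin_l _ _ d2).
- rewrite <- Ey', <- Ey; now apply B2, (ball6_Rmin_r _ d1).
Qed.

End LocalLeftInverse.

Lemma chart_intro S W O phi :
  open6 W -> open2 O -> smooth_on O phi ->
  (forall x y, O x y -> S (phi x y) /\ W (phi x y)) ->
  (forall q, S q -> W q -> exists x y, O x y /\ phi x y = q) ->
  (forall x y, O x y -> immersive_at phi x y) ->
  (forall x y, O x y -> local_left_inverse O phi x y) ->
  chart S W O phi.
Proof.
intros HW HO Hsm Him Hsurj Himm Hinv.
split; [exact HW|]; split; [exact HO|]; split; [exact Hsm|].
split; [exact Him|]; split; [exact Hsurj|].
split; [|split; [exact Himm|]].
- intros x y x' y' Oxy Oxy'; exact (local_left_inverse_inj O phi x y Oxy (Hinv x y Oxy) x' y' Oxy').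
- intros x y Oxy; exact (local_left_inverse_continuous O phi x y Oxy (Hinv x y Oxy)).
Qed.

Lemma smooth_surface_of_global_chart S O phi :
  chart S (fun _ => True) O phi -> smooth_surface S.
Proof. intros Hch p _; now exists (fun _ => True), O, phi. Qed.

Lemma open6_True : open6 (fun _ => True).
Proof. intros p _; exists 1; split; [lra | easy]. Qed.

Lemma open2_True : open2 (fun _ _ => True).
Proof. intros x y _; exists 1; split; [lra | easy]. Qed.

(** * Tangent vectors *)

Definition dot6 (w q : P6) : R :=
  pa w * pa q + pb w * pb q + pc w * pc q + pd w * pd q + pe w * pe q + pf w * pf q.

Lemma dot6_add_scal w al be u v :
  dot6 w (add6 (scal6 al u) (scal6 be v)) = al * dot6 w u + be * dot6 w v.
Proof. unfold dot6, add6, scal6; simpl; ring. Qed.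

Definition derivable6 (f : R -> P6) (t : R) : Prop :=
  ex_derive (fun s => pa (f s)) t /\ ex_derive (fun s => pb (f s)) t /\
  ex_derive (fun s => pc (f s)) t /\ ex_derive (fun s => pd (f s)) t /\
  ex_derive (fun s => pe (f s)) t /\ ex_derive (fun s => pf (f s)) t.

Definition deriv6 (f : R -> P6) (t : R) : P6 :=
  mkP6 (Derive (fun s => pa (f s)) t) (Derive (fun s => pb (f s)) t)
       (Derive (fun s => pc (f s)) t) (Derive (fun s => pd (f s)) t)
       (Derive (fun s => pe (f s)) t) (Derive (fun s => pf (f s)) t).

Lemma is_derive_dot6 w f t : derivable6 f t ->
  is_derive (fun s => dot6 w (f s)) t (dot6 w (deriv6 f t)).
Proof.
intros [Ha [Hb [Hc [Hd [He Hf]]]]]; unfold dot6, deriv6; simpl.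
repeat apply (is_derive_plus (K := R_AbsRing) (V := R_NormedModule));
  apply is_derive_scal, Derive_correct; assumption.
Qed.

Lemma dot6_deriv6_locally_const w k f t : derivable6 f t ->
  locally t (fun s => dot6 w (f s) = k) -> dot6 w (deriv6 f t) = 0.
Proof.
intros Hf Hk; rewrite <- (is_derive_unique _ _ _ (is_derive_dot6 w f t Hf)).
apply is_derive_unique;
apply (is_derive_ext_loc (fun _ => k)); [|exact (is_derive_const (V := R_NormedModule) k t)].
revert Hk; apply filter_imp; now symmetry.
Qed.

Lemma smooth_on_derivable6 O phi x y : smooth_on O phi -> O x y ->
  derivable6 (fun t => phi t y) x /\ derivable6 (fun t => phi x t) y.
Proof.
intros Hsm Oxy; destruct (Hsm 1%nat) as [Ha [Hb [Hc [Hd [He Hf]]]]].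
destruct (proj1 (proj2 Ha) x y Oxy), (proj1 (proj2 Hb) x y Oxy),
  (proj1 (proj2 Hc) x y Oxy), (proj1 (proj2 Hd) x y Oxy),
  (proj1 (proj2 He) x y Oxy), (proj1 (proj2 Hf) x y Oxy).
now repeat split.
Qed.

Lemma open2_locally O x y : open2 O -> O x y ->
  locally x (fun t => O t y) /\ locally y (fun t => O x t).
Proof.
intros HO Oxy; destruct (HO x y Oxy) as [r [Hr H]].
assert (H0 : Rabs 0 < r) by now rewrite Rabs_R0.
split; exists (mkposreal r Hr); intros t Ht.
- apply H; [exact Ht | now rewrite Rminus_eq_0].
- apply H; [now rewrite Rminus_eq_0 | exact Ht].
Qed.

Lemma tangent_dot6_eq0 S w k p v : (forall q, S q -> dot6 w q = k) ->
  tangent S p v -> dot6 w v = 0.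
Proof.
intros Hk [W [O [phi [x [y [Hch [Oxy [_ [al [be ->]]]]]]]]]].
destruct Hch as [_ [HO [Hsm [Him _]]]].
destruct (smooth_on_derivable6 O phi x y Hsm Oxy) as [Dx Dy].
destruct (open2_locally O x y HO Oxy) as [Lx Ly].
assert (Hx : dot6 w (dx phi x y) = 0).
{ apply (dot6_deriv6_locally_const w k _ _ Dx).
  revert Lx; apply filter_imp; intros t Ot; now apply Hk, Him. }
assert (Hy : dot6 w (dy phi x y) = 0).
{ apply (dot6_deriv6_locally_const w k _ _ Dy).
  revert Ly; apply filter_imp; intros t Ot; now apply Hk, Him. }
now rewrite dot6_add_scal, Hx, Hy, !Rmult_0_r, Rplus_0_r.
Qed.

Lemma tangent_dx S W O phi x y : chart S W O phi -> O x y ->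
  tangent S (phi x y) (dx phi x y).
Proof.
intros Hch Oxy; exists W, O, phi, x, y.
split; [exact Hch|]; split; [exact Oxy|]; split; [reflexivity|].
exists 1, 0; unfold add6, scal6; destruct (dx phi x y); simpl; f_equal; ring.
Qed.

Lemma tangent_planes_differ S1 S2 w k p v : tangent S1 p v ->
  (forall q, S2 q -> dot6 w q = k) -> dot6 w v <> 0 ->
  ~ (forall u, tangent S1 p u <-> tangent S2 p u).
Proof. intros Hv Hk Hw Heq; apply Hw, (tangent_dot6_eq0 S2 w k p); [exact Hk | now apply Heq]. Qed.

(** * Flatness *)

Definition rho11 (p : P6) : R := (pa p - pd p + 1) * pd p + pb p * (pf p - pc p).
Definition rho12 (p : P6) : R := pc p * pd p - pb p * pe p + pf p.
Definition rho21 (p : P6) : R := pc p * (pd p - 1) - pb p * pe p.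
Definition rho22 (p : P6) : R := - pc p ^ 2 + pf p * pc p + (pa p - pd p - 1) * pe p.

Lemma flat_iff_rho p :
  flat p <-> rho11 p = 0 /\ rho12 p = 0 /\ rho21 p = 0 /\ rho22 p = 0.
Proof.
unfold flat, ricci, rho11, rho12, rho21, rho22; split.
- intro Hflat.
  pose proof (Hflat 1 Rlt_0_1 1%nat 1%nat ltac:(lia) ltac:(lia)) as H11.
  pose proof (Hflat 1 Rlt_0_1 1%nat 2%nat ltac:(lia) ltac:(lia)) as H12.
  pose proof (Hflat 1 Rlt_0_1 2%nat 1%nat ltac:(lia) ltac:(lia)) as H21.
  pose proof (Hflat 1 Rlt_0_1 2%nat 2%nat ltac:(lia) ltac:(lia)) as H22.
  simpl in H11, H12, H21, H22; replace (/ (1 * 1)) with 1 in * by field; lra.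
- intros [H11 [H12 [H21 H22]]] x1 _ i j Hi Hj.
  destruct i as [|[|[|i]]]; try lia; destruct j as [|[|[|j]]]; try lia;
    [rewrite H11 | rewrite H12 | rewrite H21 | rewrite H22]; ring.
Qed.

Lemma flat_iff_families p : flat p <-> BB1 p \/ BB2 p \/ BB3 p.
Proof.
rewrite flat_iff_rho; split.
- destruct p as [a b c d e f]; unfold rho11, rho12, rho21, rho22; cbn [pa pb pc pd pe pf].
  intros [H11 [H12 [H21 H22]]].
  assert (Hf : f = - c) by lra; subst f.
  destruct (Req_dec e 0) as [He|He].
  + subst e; assert (Hc : c = 0) by nra; subst c.
    destruct (Req_dec d 0) as [Hd|Hd]; right; [left | right]; exists a, b.
    * unfold U2; f_equal; lra.
    * unfold U3; f_equal; [nra | lra].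
  + left; exists e, (c / e).
    assert (Hde : d * e = - c ^ 2).
    { assert (E : e * ((a - d + 1) * d + b * (- c - c))
                  - d * (- c ^ 2 + - c * c + (a - d - 1) * e)
                  - 2 * c * (c * (d - 1) - b * e) = 2 * (d * e + c ^ 2)) by ring.
      rewrite H11, H21, H22 in E; lra. }
    assert (Hb : b * e ^ 2 = - c ^ 3 - c * e).
    { assert (E : b * e ^ 2 + c ^ 3 + c * e
                  = - e * (c * (d - 1) - b * e) + c * (d * e + c ^ 2)) by ring.
      rewrite H21, Hde in E; lra. }
    unfold U1; f_equal; field_simplify_eq; auto; nra.
- intros [[r [s ->]] | [[u [v ->]] | [u [v ->]]]];
    unfold rho11, rho12, rho21, rho22; simpl; repeat split; ring.
Qed.

Lemma BB0_iff p : BB0 p <-> (BB1 p \/ BB2 p \/ BB3 p) /\ p <> zero6.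
Proof. unfold BB0; rewrite flat_iff_families; tauto. Qed.

(** * The surfaces *)

Definition BB1_edge (p : P6) : Prop := exists v, p = mkP6 0 v 0 1 0 0.
Definition BB1t (p : P6) : Prop := BB1 p \/ BB1_edge p.
Definition U1_axis (p : P6) : Prop := exists r, p = mkP6 1 0 0 0 r 0.

Lemma BB1t_iff p : BB1t p <-> flat p /\ pa p + pd p = 1.
Proof.
unfold BB1t; rewrite flat_iff_families; split.
- intros [[r [s ->]] | [v ->]]; simpl; split; try ring.
  + left; now exists r, s.
  + right; right; exists 0, v; unfold U3; f_equal; ring.
- intros [[[r [s ->]] | [[u [v ->]] | [u [v ->]]]] Had]; simpl in Had.
  + left; now exists r, s.
  + left; exists 0, (- v); unfold U1, U2; f_equal; lra.
  + right; exists v; unfold U3; f_equal; lra.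
Qed.

Lemma closed6_flat : closed6 flat.
Proof.
apply (closed6_ext (fun q => rho11 q = 0 /\ rho12 q = 0 /\ rho21 q = 0 /\ rho22 q = 0)).
- intro q; symmetry; apply flat_iff_rho.
- unfold rho11, rho12, rho21, rho22; solve_closed6.
Qed.

Lemma closed6_BB1t : closed6 BB1t.
Proof.
apply (closed6_ext (fun q => flat q /\ pa q + pd q - 1 = 0)).
- intro q; rewrite BB1t_iff; split; intros [H1 H2]; split; auto; lra.
- apply closed6_and; [exact closed6_flat | solve_closed6].
Qed.

Lemma closed6_BB2 : closed6 BB2.
Proof.
apply (closed6_ext (fun q => pc q = 0 /\ pd q = 0 /\ pe q = 0 /\ pf q = 0)); [|solve_closed6].
intros [a b c d e f]; split; simpl.
- intros (-> & -> & -> & ->); now exists a, b.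
- intros [u [v E]]; injection E; intros; subst; auto.
Qed.

Lemma closed6_BB3 : closed6 BB3.
Proof.
apply (closed6_ext (fun q => pc q = 0 /\ pd q - pa q - 1 = 0 /\ pe q = 0 /\ pf q = 0));
  [|solve_closed6].
intros [a b c d e f]; split; simpl.
- intros (-> & Hd & -> & ->); exists a, b; unfold U3; f_equal; lra.
- intros [u [v E]]; injection E; intros; subst; repeat split; ring.
Qed.

Lemma closed6_BB1_edge : closed6 BB1_edge.
Proof.
apply (closed6_ext (fun q => pa q = 0 /\ pc q = 0 /\ pd q - 1 = 0 /\ pe q = 0 /\ pf q = 0));
  [|solve_closed6].
intros [a b c d e f]; split; simpl.
- intros (-> & -> & Hd & -> & ->); exists b; f_equal; lra.
- intros [v E]; injection E; intros; subst; repeat split; ring.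
Qed.

Lemma closed6_U1_axis : closed6 U1_axis.
Proof.
apply (closed6_ext (fun q => pa q - 1 = 0 /\ pb q = 0 /\ pc q = 0 /\ pd q = 0 /\ pf q = 0));
  [|solve_closed6].
intros [a b c d e f]; split; simpl.
- intros (Ha & -> & -> & -> & ->); exists e; f_equal; lra.
- intros [r E]; injection E; intros; subst; repeat split; ring.
Qed.

(* For t <> 0, psi t b = U1 (-(1 + b t) t^2) (1 / t): psi reparametrises U1 near s = oo and reaches the edge at t = 0. *)
Definition psi (t b : R) : P6 :=
  mkP6 (- b * t) b (- (1 + b * t) * t) (1 + b * t) (- (1 + b * t) * t ^ 2) ((1 + b * t) * t).

Lemma psi_BB1 t b : t <> 0 -> BB1 (psi t b).
Proof. intro Ht; exists (- (1 + b * t) * t ^ 2), (1 / t); unfold psi, U1; f_equal; field; exact Ht. Qed.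

Ltac compute_derivative := unfold dx, dy; cbn [pa pb pc pd pe pf U1 U2 U3 psi]; f_equal;
  apply is_derive_unique; auto_derive; try exact I; ring.

Lemma dx_U1 r s : dx U1 r s = mkP6 (s ^ 2) (- s ^ 3) s (- s ^ 2) 1 (- s).
Proof. compute_derivative. Qed.
Lemma dy_U1 r s : dy U1 r s = mkP6 (2 * r * s) (- (1 + 3 * r * s ^ 2)) r (- 2 * r * s) 0 (- r).
Proof. compute_derivative. Qed.
Lemma dx_U2 u v : dx U2 u v = mkP6 1 0 0 0 0 0.
Proof. compute_derivative. Qed.
Lemma dy_U2 u v : dy U2 u v = mkP6 0 1 0 0 0 0.
Proof. compute_derivative. Qed.
Lemma dx_U3 u v : dx U3 u v = mkP6 1 0 0 1 0 0.
Proof. compute_derivative. Qed.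
Lemma dy_U3 u v : dy U3 u v = mkP6 0 1 0 0 0 0.
Proof. compute_derivative. Qed.
Lemma dx_psi t b : dx psi t b =
  mkP6 (- b) 0 (- (1 + 2 * b * t)) b (- (2 * t + 3 * b * t ^ 2)) (1 + 2 * b * t).
Proof. compute_derivative. Qed.
Lemma dy_psi t b : dy psi t b = mkP6 (- t) 1 (- t ^ 2) t (- t ^ 3) (t ^ 2).
Proof. compute_derivative. Qed.

Ltac P6_components H := unfold add6, scal6, zero6 in H; simpl in H; injection H; intros.

Lemma chart_U2 : chart BB2 (fun _ => True) (fun _ _ => True) U2.
Proof.
apply chart_intro.
- exact open6_True.
- exact open2_True.
- apply smooth_on_poly2; simpl; solve_poly2.
- intros u v _; split; [now exists u, v | easy].
- intros q [u [v ->]] _; now exists u, v.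
- intros u v _ al be H; rewrite dx_U2, dy_U2 in H; P6_components H; lra.
- intros u v _; exists (fun _ => True), pa, pb.
  repeat split; auto using open6_True, cont6_pa, cont6_pb.
Qed.

Lemma chart_U3 : chart BB3 (fun _ => True) (fun _ _ => True) U3.
Proof.
apply chart_intro.
- exact open6_True.
- exact open2_True.
- apply smooth_on_poly2; simpl; solve_poly2.
- intros u v _; split; [now exists u, v | easy].
- intros q [u [v ->]] _; now exists u, v.
- intros u v _ al be H; rewrite dx_U3, dy_U3 in H; P6_components H; lra.
- intros u v _; exists (fun _ => True), pa, pb.
  repeat split; auto using open6_True, cont6_pa, cont6_pb.
Qed.

Lemma U1_not_edge r s : ~ BB1_edge (U1 r s).
Proof. intros [v E]; injection E; intros; subst; lra. Qed.

Lemma local_left_inverse_U1 r s : local_left_inverse (fun _ _ => True) U1 r s.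
Proof.
destruct (Req_dec r 0) as [->|Hr].
- exists (fun q => pa q <> 0), pe, (fun q => - pb q / pa q); cbn [pa pb pc pd pe pf U1].
  split; [apply open6_neq0; intro; solve_cont6|]; split; [lra|].
  split; [solve_cont6|]; split; [solve_cont6; cbn; lra|].
  intros r' s' _ Ha; split; [reflexivity | field; exact Ha].
- exists (fun q => pe q <> 0), pe, (fun q => pc q / pe q); cbn [pa pb pc pd pe pf U1].
  split; [apply open6_neq0; intro; solve_cont6|]; split; [exact Hr|].
  split; [solve_cont6|]; split; [solve_cont6; exact Hr|].
  intros r' s' _ He; split; [reflexivity | field; exact He].
Qed.

Lemma chart_U1 : chart BB1t (fun q => ~ BB1_edge q) (fun _ _ => True) U1.
Proof.
apply chart_intro.
- exact closed6_BB1_edge.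
- exact open2_True.
- apply smooth_on_poly2; simpl; solve_poly2.
- intros r s _; split; [left; now exists r, s | apply U1_not_edge].
- intros q [[r [s ->]] | Hedge] Hnedge; [now exists r, s | contradiction].
- intros r s _ al be H; rewrite dx_U1, dy_U1 in H; P6_components H.
  assert (Hal : al = 0) by lra; subst al; split; [reflexivity|].
  destruct (Req_dec r 0) as [->|Hr]; nra.
- intros r s _; apply local_left_inverse_U1.
Qed.

Lemma psi_not_U1_axis t b : ~ U1_axis (psi t b).
Proof. intros [r E]; injection E; intros; subst; lra. Qed.

Lemma local_left_inverse_psi t b : local_left_inverse (fun _ _ => True) psi t b.
Proof.
destruct (Req_dec b 0) as [->|Hb].
- exists (fun q => pd q <> 0), (fun q => - pc q / pd q), pb; cbn [pa pb pc pd pe pf psi].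
  split; [apply open6_neq0; intro; solve_cont6|]; split; [lra|].
  split; [solve_cont6; cbn; lra|]; split; [solve_cont6|].
  intros t' b' _ Hd; split; [field; exact Hd | reflexivity].
- exists (fun q => pb q <> 0), (fun q => - pa q / pb q), pb; cbn [pa pb pc pd pe pf psi].
  split; [apply open6_neq0; intro; solve_cont6|]; split; [exact Hb|].
  split; [solve_cont6; exact Hb|]; split; [solve_cont6|].
  intros t' b' _ Hb'; split; [field; exact Hb' | reflexivity].
Qed.

Lemma chart_psi : chart BB1t (fun q => ~ U1_axis q) (fun _ _ => True) psi.
Proof.
apply chart_intro.
- exact closed6_U1_axis.
- exact open2_True.
- apply smooth_on_poly2; simpl; solve_poly2.
- intros t b _; split; [|apply psi_not_U1_axis].
  destruct (Req_dec t 0) as [->|Ht]; [right | left; now apply psi_BB1].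
  exists b; unfold psi; f_equal; ring.
- intros q [[r [s ->]] | [v ->]] Hnaxis.
  + destruct (Req_dec s 0) as [->|Hs].
    * exfalso; apply Hnaxis; exists r; unfold U1; f_equal; ring.
    * exists (1 / s), (- s * (1 + r * s ^ 2)); split; [easy|].
      unfold psi, U1; f_equal; field; exact Hs.
  + exists 0, v; split; [easy|]; unfold psi; f_equal; ring.
- intros t b _ al be H; rewrite dx_psi, dy_psi in H; P6_components H.
  assert (Hbe : be = 0) by lra; subst be; split; [|reflexivity].
  destruct (Req_dec b 0) as [->|Hb]; nra.
- intros t b _; apply local_left_inverse_psi.
Qed.

Lemma smooth_surface_BB1t : smooth_surface BB1t.
Proof.
intros p [[r [s ->]] | [v ->]].
- exists (fun q => ~ BB1_edge q), (fun _ _ => True), U1; split; [exact chart_U1 | apply U1_not_edge].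
- exists (fun q => ~ U1_axis q), (fun _ _ => True), psi; split; [exact chart_psi|].
  replace (mkP6 0 v 0 1 0 0) with (psi 0 v) by (unfold psi; f_equal; ring).
  apply psi_not_U1_axis.
Qed.

Lemma BB1_edge_in_closure p : BB1_edge p -> closure6 BB1 p.
Proof.
intros [v ->] r Hr.
set (m := Rmin r 1); set (w := Rabs v); set (t := m / (2 * (1 + w))).
assert (Hm : 0 < m) by (apply Rmin_pos; lra).
assert (Hmr : m <= r) by apply Rmin_l.
assert (Hm1 : m <= 1) by apply Rmin_r.
assert (Hv : - w <= v <= w) by (apply Rabs_le_between, Rle_refl).
assert (Ht : t * (2 * (1 + w)) = m) by (unfold t; field; lra).
assert (Ht0 : 0 < t) by (unfold t; apply Rdiv_lt_0_compat; lra).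
assert (Ht2 : 2 * t <= m) by nra.
assert (Hvt : - (m / 2) < v * t < m / 2) by (split; nra).
exists (psi t v); split; [apply psi_BB1; lra|].
unfold ball6, psi; cbn [pa pb pc pd pe pf].
repeat split; apply Rabs_def1; nra.
Qed.

Lemma BB1t_in_closure p : BB1t p -> closure6 BB1 p.
Proof.
intros [HB | Hedge]; [|exact (BB1_edge_in_closure p Hedge)].
intros r Hr; exists p; split; [exact HB | now apply ball6_center].
Qed.

Lemma transversal_BB2_BB3 :
  transversal_along BB2 BB3 (fun p => exists v, p = mkP6 (-1) v 0 0 0 0).
Proof.
split.
- intro p; split.
  + intros [[u [v ->]] [u' [v' E]]]; injection E; intros; subst.
    exists v'; unfold U2; f_equal; lra.
  + intros [v ->]; split; [now exists (-1), v|].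
    exists (-1), v; unfold U3; f_equal; ring.
- intros p [v ->].
  apply (tangent_planes_differ _ _ (mkP6 (-1) 0 0 1 0 0) 1 _ (dx U2 (-1) v)).
  + exact (tangent_dx _ _ _ _ (-1) v chart_U2 I).
  + intros q [u [v' ->]]; unfold dot6; simpl; ring.
  + rewrite dx_U2; unfold dot6; simpl; lra.
Qed.

Lemma transversal_BB1t_BB2 :
  transversal_along BB1t BB2 (fun p => exists v, p = mkP6 1 v 0 0 0 0).
Proof.
split.
- intro p; split.
  + intros [[[r [s ->]] | [v ->]] [u' [v' E]]]; injection E; intros; subst; [|lra].
    exists (- s); unfold U1; f_equal; ring.
  + intros [v ->]; split; [|now exists 1, v].
    left; exists 0, (- v); unfold U1; f_equal; ring.
- intros p [v ->].
  apply (tangent_planes_differ _ _ (mkP6 0 0 0 0 1 0) 0 _ (dx U1 0 (- v))).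
  + replace (mkP6 1 v 0 0 0 0) with (U1 0 (- v)) by (unfold U1; f_equal; ring).
    exact (tangent_dx _ _ _ _ 0 (- v) chart_U1 I).
  + intros q [u [v' ->]]; unfold dot6; simpl; ring.
  + rewrite dx_U1; unfold dot6; simpl; lra.
Qed.

Lemma transversal_BB1t_BB3 :
  transversal_along BB1t BB3 (fun p => exists v, p = mkP6 0 v 0 1 0 0).
Proof.
split.
- intro p; split.
  + intros [[[r [s ->]] | [v ->]] [u' [v' E]]]; [injection E; intros; subst; nra|].
    now exists v.
  + intros [v ->]; split; [right; now exists v|].
    exists 0, v; unfold U3; f_equal; ring.
- intros p [v ->].
  apply (tangent_planes_differ _ _ (mkP6 0 0 1 0 0 0) 0 _ (dx psi 0 v)).
  + replace (mkP6 0 v 0 1 0 0) with (psi 0 v) by (unfold psi; f_equal; ring).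
    exact (tangent_dx _ _ _ _ 0 v chart_psi I).
  + intros q [u [v' ->]]; unfold dot6; simpl; ring.
  + rewrite dx_psi; unfold dot6; simpl; lra.
Qed.

Theorem theorem1p5 :
  (forall p : P6, BB0 p <-> ((BB1 p \/ BB2 p \/ BB3 p) /\ p <> zero6)) /\
  (closed6 BB2 /\ smooth_surface BB2 /\ diffeo_R2 BB2) /\
  (closed6 BB3 /\ smooth_surface BB3 /\ diffeo_R2 BB3) /\
  transversal_along BB2 BB3 (fun p => exists v, p = mkP6 (-1) v 0 0 0 0) /\
  (exists BB1t : P6 -> Prop,
     (forall p, BB1 p -> BB1t p) /\ (forall p, BB1t p -> closure6 BB1 p) /\
     closed6 BB1t /\ smooth_surface BB1t /\
     transversal_along BB1t BB2 (fun p => exists v, p = mkP6 1 v 0 0 0 0) /\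
     transversal_along BB1t BB3 (fun p => exists v, p = mkP6 0 v 0 1 0 0)).
Proof.
split; [exact BB0_iff|].
split; [split; [exact closed6_BB2|]; split;
        [exact (smooth_surface_of_global_chart _ _ _ chart_U2) | exists U2; exact chart_U2]|].
split; [split; [exact closed6_BB3|]; split;
        [exact (smooth_surface_of_global_chart _ _ _ chart_U3) | exists U3; exact chart_U3]|].
split; [exact transversal_BB2_BB3|].
exists BB1t.
split; [intros p Hp; now left|].
split; [exact BB1t_in_closure|].
split; [exact closed6_BB1t|].
split; [exact smooth_surface_BB1t|].
split; [exact transversal_BB1t_BB2 | exact transversal_BB1t_BB3].
Qed.
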